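(* The Zorn vector matrix algebra $\mathfrak{Z}(\mathbb{Q})$ over $\mathbb{Q}$ does not have the hyperbolic property.
   Context: $\mathfrak{Z}(R)$ is the set of matrices $\begin{pmatrix}a&v\\ w&b\end{pmatrix}$ with $a,b\in R$, $v,w\in R^3$, with entrywise addition and product $\begin{pmatrix}a&v\\ w&b\end{pmatrix}\begin{pmatrix}a'&v'\\ w'&b'\end{pmatrix}=\begin{pmatrix}aa'+v\cdot w' & av'+b'v-w\times w'\\ a'w+bw'+v\times v' & bb'+w\cdot v'\end{pmatrix}$ (dot and cross products in $R^3$). A $\mathbb{Z}$-order of a finite-dimensional $\mathbb{Q}$-algebra is a unital subring finitely generated as a $\mathbb{Z}$-module spanning the algebra over $\mathbb{Q}$; its units form a loop. The algebra has the hyperbolic property if some $\mathbb{Z}$-order has a unit loop containing no subgroup isomorphic to $\mathbb{Z}^2$. *)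

From HB Require Import structures.
From mathcomp Require Import all_boot all_order all_algebra.
Set Implicit Arguments. Unset Strict Implicit. Unset Printing Implicit Defensive.
Import Order.TTheory GRing.Theory Num.Theory.
Local Open Scope ring_scope.

(* Zorn vector matrix algebra Z(R): elements (a, v, w, b) standing for
   the matrix [[a, v], [w, b]] with a b : R, v w : R^3 (row vectors). *)
Definition zorn (R : comNzRingType) : Type :=
  (R * 'rV[R]_3 * 'rV[R]_3 * R)%type.

Section Zorn.
Variable R : comNzRingType.

Definition dot3 (v w : 'rV[R]_3) : R := \sum_(i < 3) v 0 i * w 0 i.

Definition cross3 (v w : 'rV[R]_3) : 'rV[R]_3 :=
  let x k := v 0 (inord k) in let y k := w 0 (inord k) in
  \row_(i < 3) (if val i == 0%N then x 1%N * y 2%N - x 2%N * y 1%N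
                else if val i == 1%N then x 2%N * y 0%N - x 0%N * y 2%N
                else x 0%N * y 1%N - x 1%N * y 0%N).

Definition zorn_a (z : zorn R) : R := z.1.1.1.
Definition zorn_v (z : zorn R) : 'rV[R]_3 := z.1.1.2.
Definition zorn_w (z : zorn R) : 'rV[R]_3 := z.1.2.
Definition zorn_b (z : zorn R) : R := z.2.

Definition zorn_mul (z z' : zorn R) : zorn R :=
  let a := zorn_a z in let v := zorn_v z in let w := zorn_w z in let b := zorn_b z in
  let a' := zorn_a z' in let v' := zorn_v z' in let w' := zorn_w z' in
  let b' := zorn_b z' in
  (a * a' + dot3 v w',
   a *: v' + b' *: v - cross3 w w',
   a' *: w + b *: w' + cross3 v v',
   b * b' + dot3 w v').

Definition zorn_one : zorn R := (1, 0, 0, 1).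

Definition zorn_scale (r : R) (z : zorn R) : zorn R :=
  (r * zorn_a z, r *: zorn_v z, r *: zorn_w z, r * zorn_b z).
End Zorn.

Definition zornQ := zorn rat.

Definition is_Zorder (O : pred zornQ) : Prop :=
  [/\ zorn_one rat \in O,
      (0 : zornQ) \in O,
      (forall x y, x \in O -> y \in O -> x + y \in O),
      (forall x, x \in O -> - x \in O) &
      (forall x y, x \in O -> y \in O -> zorn_mul x y \in O)] /\
  [/\
      (exists s : seq zornQ, all (fun x => x \in O) s /\
         forall x, x \in O ->
           exists c : 'I_(size s) -> int, x = \sum_(i < size s) s`_i *~ c i) &
      (forall x : zornQ, exists s : seq zornQ, all (fun x => x \in O) s /\
           exists c : 'I_(size s) -> rat, x = \sum_(i < size s) zorn_scale (c i) s`_i)].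

Definition is_unit_of (O : pred zornQ) (u : zornQ) : Prop :=
  u \in O /\ exists2 v, v \in O & zorn_mul u v = zorn_one rat /\ zorn_mul v u = zorn_one rat.

Definition unit_loop_has_Z2 (O : pred zornQ) : Prop :=
  exists f : int * int -> zornQ,
    [/\ injective f,
        (forall p, is_unit_of O (f p)) &
        (forall p q, f (p.1 + q.1, p.2 + q.2) = zorn_mul (f p) (f q))].

Definition zornQ_hyperbolic : Prop :=
  exists O : pred zornQ, is_Zorder O /\ ~ unit_loop_has_Z2 O.

From mathcomp Require Import all_boot all_order all_algebra.
Import GRing.Theory.
Local Open Scope ring_scope.

(* Let x = [[0, e1], [0, 0]] and y = [[0, 0], [e2, 0]].  All four products of
   x and y vanish (e1 x e1 = e2 x e2 = 0 and e1 . e2 = 0), so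
   (m, n) |-> 1 + m x + n y is an injective homomorphism from Z^2 into the
   units of Z(Q).  A Z-order O is a full lattice, hence contains D1 x and
   D2 y for some nonzero integers D1, D2, and then also every
   1 + m D1 x + n D2 y: its unit loop always contains Z^2. *)

Section ZornUnipotent.
Variable R : comNzRingType.

Definition vec3 (x y z : R) : 'rV[R]_3 :=
  \row_(i < 3) (if val i == 0%N then x else if val i == 1%N then y else z).

Lemma dot3_vec3 x y z x' y' z' :
  dot3 (vec3 x y z) (vec3 x' y' z') = x * x' + y * y' + z * z'.
Proof. by rewrite /dot3 !big_ord_recr big_ord0 /= !mxE /= add0r. Qed.

Lemma cross3_vec3 x y z x' y' z' :
  cross3 (vec3 x y z) (vec3 x' y' z') =
  vec3 (y * z' - z * y') (z * x' - x * z') (x * y' - y * x').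
Proof. by apply/rowP => i; rewrite /cross3 !mxE /= !inordK. Qed.

Lemma scale_vec3 r x y z : r *: vec3 x y z = vec3 (r * x) (r * y) (r * z).
Proof. by apply/rowP => i; rewrite !mxE; case: ifP => //; case: ifP. Qed.

Lemma add_vec3 x y z x' y' z' :
  vec3 x y z + vec3 x' y' z' = vec3 (x + x') (y + y') (z + z').
Proof. by apply/rowP => i; rewrite !mxE; case: ifP => //; case: ifP. Qed.

Lemma opp_vec3 x y z : - vec3 x y z = vec3 (- x) (- y) (- z).
Proof. by apply/rowP => i; rewrite !mxE; case: ifP => //; case: ifP. Qed.

Lemma mulrz_vec3 x y z (m : int) : vec3 x y z *~ m = vec3 (x *~ m) (y *~ m) (z *~ m).
Proof. by rewrite -scaler_int scale_vec3 !mulrzl. Qed.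

Lemma vec3_000 : vec3 0 0 0 = 0.
Proof. by apply/rowP => i; rewrite !mxE; case: ifP => //; case: ifP. Qed.

Lemma vec3_inj x y z x' y' z' :
  vec3 x y z = vec3 x' y' z' -> [/\ x = x', y = y' & z = z'].
Proof.
move/rowP=> eq_xyz.
by have := eq_xyz ord0; have := eq_xyz (inord 1); have := eq_xyz (inord 2);
  rewrite !mxE /= !inordK.
Qed.

Lemma zorn_mulrzE (z : zorn R) (m : int) :
  z *~ m = (zorn_a z *~ m, zorn_v z *~ m, zorn_w z *~ m, zorn_b z *~ m).
Proof.
have pair_mulrz (M1 M2 : zmodType) (p : M1 * M2) (k : int) :
    p *~ k = (p.1 *~ k, p.2 *~ k).
  by case: k => n; rewrite ?NegzE ?mulrNz -!pmulrn pairMnE.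
by rewrite pair_mulrz (pair_mulrz _ _ z.1) (pair_mulrz _ _ z.1.1).
Qed.

Lemma zorn_addE (z z' : zorn R) :
  z + z' = (zorn_a z + zorn_a z', zorn_v z + zorn_v z',
            zorn_w z + zorn_w z', zorn_b z + zorn_b z').
Proof. by []. Qed.

Definition zorn_unip (a b : R) : zorn R := (1, vec3 a 0 0, vec3 0 b 0, 1).

Lemma zorn_unip_mul a b a' b' :
  zorn_mul (zorn_unip a b) (zorn_unip a' b') = zorn_unip (a + a') (b + b').
Proof.
rewrite /zorn_mul /zorn_unip /zorn_a /zorn_v /zorn_w /zorn_b /=.
rewrite !dot3_vec3 !cross3_vec3 !scale_vec3 !opp_vec3 !add_vec3.
by rewrite !(mulr0, mul0r, mul1r, addr0, add0r, subr0, oppr0) [a' + a]addrC.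
Qed.

Lemma zorn_unip_inj a b a' b' :
  zorn_unip a b = zorn_unip a' b' -> a = a' /\ b = b'.
Proof. by case=> /vec3_inj[-> _ _] /vec3_inj[_ -> _]. Qed.

Lemma zorn_unip00 : zorn_unip 0 0 = zorn_one R.
Proof. by rewrite /zorn_unip vec3_000. Qed.

Lemma zorn_unip_mulrz a b (m n : int) :
  zorn_unip (a *~ m) (b *~ n) =
  zorn_one R + (0, vec3 a 0 0, 0, 0) *~ m + (0, 0, vec3 0 b 0, 0) *~ n.
Proof.
rewrite !zorn_mulrzE !zorn_addE /zorn_a /zorn_v /zorn_w /zorn_b /=.
by rewrite /zorn_unip -vec3_000 !mulrz_vec3 !mul0rz !add_vec3 !(addr0, add0r).
Qed.

End ZornUnipotent.

Arguments vec3 {R}.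
Arguments zorn_unip {R}.

Lemma zorn_scale_mulrz_denq (z : zornQ) (r : rat) :
  zorn_scale r z *~ denq r = z *~ numq r.
Proof.
have denqK : (denq r)%:~R * r = (numq r)%:~R by rewrite numqE mulrC.
have mulr_denq (s : rat) : (r * s) *~ denq r = s *~ numq r.
  by rewrite -[LHS]mulrzl -[RHS]mulrzl mulrA denqK.
have scaler_denq (v : 'rV[rat]_3) : (r *: v) *~ denq r = v *~ numq r.
  by rewrite -[LHS]scaler_int -[RHS]scaler_int scalerA denqK.
rewrite !zorn_mulrzE /zorn_scale /zorn_a /zorn_v /zorn_w /zorn_b /=.
by rewrite !mulr_denq !scaler_denq.
Qed.

Section ZOrder.
Variable O : pred zornQ.
Hypotheses (O0 : (0 : zornQ) \in O)
  (OD : forall x y, x \in O -> y \in O -> x + y \in O)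
  (ON : forall x, x \in O -> - x \in O)
  (Ospan : forall x : zornQ, exists s : seq zornQ, all (fun x => x \in O) s /\
     exists c : 'I_(size s) -> rat, x = \sum_(i < size s) zorn_scale (c i) s`_i).

Lemma Zorder_mulrz x (m : int) : x \in O -> x *~ m \in O.
Proof.
have Omulrn n : x \in O -> x *+ n \in O.
  by move=> Ox; elim: n => [|n IHn]; rewrite ?mulr0n // mulrS OD.
move=> Ox; case: m => n; first by rewrite -pmulrn Omulrn.
by rewrite NegzE mulrNz ON // -pmulrn Omulrn.
Qed.

Lemma Zorder_int_multiple (x : zornQ) : exists2 D : int, D != 0 & x *~ D \in O.
Proof.
have [s [Os [c ->]]] := Ospan x.
apply: (big_ind (fun x => exists2 D : int, D != 0 & x *~ D \in O)).
- by exists 1; rewrite ?mul0rz.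
- move=> x1 x2 [D1 nzD1 O1] [D2 nzD2 O2]; exists (D1 * D2).
    by rewrite mulf_neq0.
  rewrite mulrzDl mulrzA [D1 * D2]mulrC mulrzA.
  by apply: OD; apply: Zorder_mulrz.
- move=> i _; exists (denq (c i)); first by rewrite denq_neq0.
  by rewrite zorn_scale_mulrz_denq; apply/Zorder_mulrz/(all_nthP 0 Os).
Qed.

End ZOrder.

Lemma Zorder_unit_loop_has_Z2 (O : pred zornQ) : is_Zorder O -> unit_loop_has_Z2 O.
Proof.
case=> [[O1 O0 OD ON _] [_ Ospan]].
have Omulrz := Zorder_mulrz _ O0 OD ON.
have [D1 nzD1 OD1] := Zorder_int_multiple _ O0 OD ON Ospan (0, vec3 1 0 0, 0, 0).
have [D2 nzD2 OD2] := Zorder_int_multiple _ O0 OD ON Ospan (0, 0, vec3 0 1 0, 0).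
pose f (p : int * int) : zornQ := zorn_unip (p.1 * D1)%:~R (p.2 * D2)%:~R.
have Of p : f p \in O.
  rewrite /f zorn_unip_mulrz ![(p.1 * _)]mulrC ![(p.2 * _)]mulrC !mulrzA.
  by apply: (OD); [apply: (OD)|]; rewrite // Omulrz.
have f_morph p q : f (p.1 + q.1, p.2 + q.2) = zorn_mul (f p) (f q).
  by rewrite zorn_unip_mul -!intrD -!mulrDl.
exists f; split=> // [[m n] [m' n'] /zorn_unip_inj[/= eq_m eq_n]|p].
  by rewrite (mulIf nzD1 (intr_inj eq_m)) (mulIf nzD2 (intr_inj eq_n)).
split=> //; exists (f (- p.1, - p.2)) => //.
by rewrite -!f_morph /= !subrr !addNr /f !mul0r zorn_unip00.
Qed.

Theorem proposition3p2 : ~ zornQ_hyperbolic.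
Proof. by case=> O [/Zorder_unit_loop_has_Z2]. Qed.
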